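(* Let $T=(V,E)$ be a tree with labeled leaves $1,\dots,n$, let $(\theta_e)_{e\in E}$ be edge weights in $[-1,1]$, and let $\theta'$ be a weight vector that differs from $\theta$ only on one edge $e'$. Then $\mathrm{TV}(\Pr_{T,\theta}[x],\Pr_{T,\theta'}[x])\le|\theta'_{e'}-\theta_{e'}|/2$.
   Context: For a tree $T$ with edge weights $\theta_e\in[-1,1]$, the Ising model assigns spins $x_v\in\{-1,1\}$ to all nodes with probability $\propto\prod_{(u,v)\in E}\frac{1+\theta_{uv}x_ux_v}{2}$; $\Pr_{T,\theta}[x]$ denotes the induced marginal distribution of the spins $x=(x_1,\dots,x_n)$ of the leaves. $\mathrm{TV}(\mu,\nu)=\frac12\sum_x|\mu(x)-\nu(x)|$. *)

From mathcomp Require Import all_boot all_order all_algebra.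
Set Implicit Arguments. Unset Strict Implicit. Unset Printing Implicit Defensive.
Import Order.TTheory GRing.Theory Num.Theory.
Local Open Scope ring_scope.

Section IsingTree.
Variables (R : realFieldType) (V : finType).

Definition is_tree (e : rel V) : Prop :=
  symmetric e /\ irreflexive e /\
  (forall u v : V, connect e u v) /\
  (forall c : seq V, uniq c -> (2 < size c)%N -> ~~ cycle e c).

Definition is_leaf (e : rel V) (v : V) : bool := #|[set w | e v w]| == 1%N.

Definition spin (b : bool) : R := if b then 1 else -1.

(* Edge weights are indexed by unordered edges {u,v} : {set V}.
   Each undirected edge is enumerated once via the ordering enum_rank u < enum_rank v. *)
Definition ising_weight (e : rel V) (theta : {set V} -> R) (sigma : {ffun V -> bool}) : R :=
  \prod_(p : V * V | e p.1 p.2 && (enum_rank p.1 < enum_rank p.2)%N)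
     ((1 + theta [set p.1; p.2] * spin (sigma p.1) * spin (sigma p.2)) / 2).

Definition ising_Z (e : rel V) (theta : {set V} -> R) : R :=
  \sum_(sigma : {ffun V -> bool}) ising_weight e theta sigma.

Definition leaf_marginal (n : nat) (e : rel V) (lab : 'I_n -> V)
  (theta : {set V} -> R) (x : {ffun 'I_n -> bool}) : R :=
  (\sum_(sigma : {ffun V -> bool} | [forall i, sigma (lab i) == x i])
      ising_weight e theta sigma) / ising_Z e theta.

End IsingTree.

Definition TV (R : realFieldType) (T : finType) (mu nu : T -> R) : R :=
  2^-1 * \sum_(x : T) `|mu x - nu x|.

From mathcomp Require Import all_boot all_order all_algebra ring lra.
Import Order.TTheory GRing.Theory Num.Theory.

Set Implicit Arguments.
Unset Strict Implicit.
Unset Printing Implicit Defensive.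

(* Deleting the edge {a, b} splits the tree; let C be the component of b.
   Flipping every spin in C preserves the factor of each other edge and
   negates s_a s_b.  Writing W(s) for the product of the other edge factors,
   the Ising weight is W(s) (1 + theta_ab s_a s_b) / 2, so the flip symmetry
   makes Z = sum_s W(s) / 2 independent of theta_ab, while the weights for
   theta and theta' differ by W(s) s_a s_b (theta'_ab - theta_ab) / 2.  Their
   l1 distance is thus |theta'_ab - theta_ab| Z, and marginalising onto the
   leaves does not increase it. *)

Section TreeCut.
Variables (V : finType) (e : rel V).
Hypothesis esym : symmetric e.

Definition acyclic : Prop :=
  forall c : seq V, uniq c -> (2 < size c)%N -> ~~ cycle e c.

Definition del_edge (a b : V) : rel V :=
  [rel u v | e u v && ([set u; v] != [set a; b])].

Lemma del_edge_sym a b : symmetric (del_edge a b).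
Proof. by move=> u v; rewrite /del_edge /= esym setUC. Qed.

Lemma acyclic_del_edge_disconnected a b :
  acyclic -> e a b -> a != b -> ~~ connect (del_edge a b) b a.
Proof.
move=> acyc eab ab; apply/negP => /connectP[p pP].
case: (shortenP pP) => q qP uq _ lastq.
have size_q : (2 < size (b :: q))%N.
  case: q qP lastq {uq} => [|x [|y q]] //= qP lastq.
    by rewrite -lastq eqxx in ab.
  by move: qP; rewrite -lastq /= /del_edge /= setUC eqxx !andbF.
have cyc_q : cycle e (b :: q).
  rewrite /cycle rcons_path -lastq eab andbT.
  by apply: sub_path qP => u v /andP[].
by have := acyc _ uq size_q; rewrite cyc_q.
Qed.

Lemma tree_edge_cut a b : acyclic -> e a b -> a != b ->
  exists C : {set V}, [/\ b \in C, a \notin C &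
    forall u v, e u v -> [set u; v] != [set a; b] -> (u \in C) = (v \in C)].
Proof.
move=> acyc eab ab; exists [set v | connect (del_edge a b) b v]; split.
- by rewrite inE connect0.
- by rewrite inE acyclic_del_edge_disconnected.
move=> u v euv uv_ab; rewrite !inE.
have del_uv : del_edge a b u v by rewrite /del_edge /= euv uv_ab.
apply/idP/idP => /connect_trans; apply; apply: connect1 => //.
by rewrite del_edge_sym.
Qed.

End TreeCut.

Local Open Scope ring_scope.

Lemma sum_odd_involution (R : numDomainType) (T : finType) (phi : T -> T)
    (g : T -> R) :
  involutive phi -> (forall x, g (phi x) = - g x) -> \sum_x g x = 0.
Proof.
move=> phiK g_odd; apply/eqP; suff: (\sum_x g x) *+ 2 == 0 by rewrite mulrn_eq0.
rewrite mulr2n {1}(reindex_inj (can_inj phiK)) /=.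
by rewrite -big_split /= big1 // => x _; rewrite g_odd addNr.
Qed.

Lemma TV_pushforward_le (R : realFieldType) (T X : finType) (f : T -> X)
    (w w' : T -> R) (Z : R) (mu nu : X -> R) :
  0 <= Z ->
  (forall x, mu x = (\sum_(s | f s == x) w s) / Z) ->
  (forall x, nu x = (\sum_(s | f s == x) w' s) / Z) ->
  TV mu nu <= (\sum_s `|w s - w' s|) / (2 * Z).
Proof.
move=> Z_ge0 muE nuE; rewrite /TV invfM mulrCA ler_wpM2l ?invr_ge0 ?ler0n //.
rewrite (partition_big f xpredT) //= mulr_suml ler_sum // => x _.
rewrite muE nuE -mulrBl -sumrB normrM [`|Z^-1|]ger0_norm ?invr_ge0 //.
by rewrite ler_wpM2r ?invr_ge0 ?ler_norm_sum.
Qed.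

Section IsingEdge.
Variables (R : realFieldType) (V : finType) (e : rel V).

Lemma spinN x : spin R (~~ x) = - spin R x.
Proof. by case: x; rewrite /spin /= ?opprK. Qed.

Lemma normr_spin x : `|spin R x| = 1.
Proof. by case: x; rewrite /spin ?normrN normr1. Qed.

Definition oriented_edge (p : V * V) : bool :=
  e p.1 p.2 && (enum_rank p.1 < enum_rank p.2)%N.

Definition edge_factor (th : {set V} -> R) (s : {ffun V -> bool}) (p : V * V) :
    R :=
  (1 + th [set p.1; p.2] * spin R (s p.1) * spin R (s p.2)) / 2.

Definition rest_weight (a b : V) (th : {set V} -> R) (s : {ffun V -> bool}) : R :=
  \prod_(p | oriented_edge p && ([set p.1; p.2] != [set a; b]))
    edge_factor th s p.

Definition eq_off_edge (a b : V) (th th' : {set V} -> R) : Prop :=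
  forall u v, e u v -> [set u; v] != [set a; b] -> th' [set u; v] = th [set u; v].

Definition edge_spin (a b : V) (s : {ffun V -> bool}) : R :=
  spin R (s a) * spin R (s b).

Lemma oriented_edge_set2 a b : e a b -> (enum_rank a < enum_rank b)%N ->
  forall p, oriented_edge p && ([set p.1; p.2] == [set a; b]) = (p == (a, b)).
Proof.
move=> eab lt_ab [u v]; apply/idP/eqP => [|[-> ->]]; last first.
  by rewrite /oriented_edge /= eab lt_ab eqxx.
case/andP=> /andP[/= _ lt_uv] /eqP uv_ab.
have : u \in [set a; b] by rewrite -uv_ab set21.
have : v \in [set a; b] by rewrite -uv_ab set22.
rewrite !inE => /orP[]/eqP v_ab /orP[]/eqP u_ab; subst u v => //.
- by rewrite ltnn in lt_uv.
- by have := ltn_trans lt_uv lt_ab; rewrite ltnn.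
- by rewrite ltnn in lt_uv.
Qed.

Lemma edge_factor_ge0 th s p :
  -1 <= th [set p.1; p.2] <= 1 -> 0 <= edge_factor th s p.
Proof.
rewrite /edge_factor /spin => /andP[th_ge th_le]; apply: divr_ge0 => //.
by case: (s p.1); case: (s p.2); lra.
Qed.

Lemma rest_weight_ge0 a b th s :
  (forall u v, e u v -> -1 <= th [set u; v] <= 1) -> 0 <= rest_weight a b th s.
Proof.
move=> th_bd; apply: prodr_ge0 => p /andP[/andP[ep _] _].
exact/edge_factor_ge0/th_bd.
Qed.

Lemma rest_weight_eq a b th th' s :
  eq_off_edge a b th th' ->
  rest_weight a b th' s = rest_weight a b th s.
Proof.
move=> th_off; apply: eq_bigr => p /andP[/andP[ep _] p_ab].
by rewrite /edge_factor th_off.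
Qed.

Hypothesis esym : symmetric e.

Lemma ising_weight_edge a b th s : e a b -> a != b ->
  ising_weight e th s = rest_weight a b th s * edge_factor th s (a, b).
Proof.
wlog lt_ab : a b / (enum_rank a < enum_rank b)%N => [wlog_ab eab ab|eab _].
  have [lt_ab|lt_ba|/val_inj/enum_rank_inj eq_ab] :=
    ltngtP (enum_rank a) (enum_rank b).
  - exact: wlog_ab.
  - rewrite (wlog_ab b a) 1?esym 1?eq_sym // /rest_weight /edge_factor /= setUC.
    by congr (_ * ((1 + _) / 2)); ring.
  by rewrite eq_ab eqxx in ab.
rewrite /ising_weight (bigID (fun p => [set p.1; p.2] == [set a; b])) /= mulrC.
by rewrite (eq_bigl _ _ (oriented_edge_set2 eab lt_ab)) big_pred1_eq.
Qed.

Lemma ising_weight_sub a b th th' s : e a b -> a != b ->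
  eq_off_edge a b th th' ->
  ising_weight e th' s - ising_weight e th s =
    rest_weight a b th s * edge_spin a b s *
      ((th' [set a; b] - th [set a; b]) / 2).
Proof.
move=> eab ab th_off.
rewrite !(ising_weight_edge _ _ eab ab) (rest_weight_eq _ th_off).
by rewrite /edge_factor /edge_spin /=; ring.
Qed.

Lemma normr_ising_weight_sub a b th th' s : e a b -> a != b ->
  (forall u v, e u v -> -1 <= th [set u; v] <= 1) ->
  eq_off_edge a b th th' ->
  `|ising_weight e th' s - ising_weight e th s| =
    rest_weight a b th s * (`|th' [set a; b] - th [set a; b]| / 2).
Proof.
move=> eab ab th_bd th_off; rewrite (ising_weight_sub _ eab ab th_off) !normrM.
rewrite !normr_spin !mulr1 [`|2^-1|]ger0_norm ?invr_ge0 ?ler0n //.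
by rewrite ger0_norm // rest_weight_ge0.
Qed.

Section FlipCut.
Variables (a b : V) (C : {set V}).
Hypotheses (eab : e a b) (ab : a != b) (bC : b \in C) (aC : a \notin C).
Hypothesis cutC :
  forall u v, e u v -> [set u; v] != [set a; b] -> (u \in C) = (v \in C).

Definition flip_spins (s : {ffun V -> bool}) : {ffun V -> bool} :=
  [ffun v => if v \in C then ~~ s v else s v].

Lemma flip_spinsK : involutive flip_spins.
Proof.
by move=> s; apply/ffunP => v; rewrite !ffunE; case: (v \in C); rewrite ?negbK.
Qed.

Lemma rest_weight_flip th s :
  rest_weight a b th (flip_spins s) = rest_weight a b th s.
Proof.
apply: eq_bigr => p /andP[/andP[ep _] p_ab].
rewrite /edge_factor !ffunE -(cutC ep p_ab).
by case: ifP => // _; rewrite !spinN !mulrN mulNr opprK.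
Qed.

Lemma edge_spin_flip s : edge_spin a b (flip_spins s) = - edge_spin a b s.
Proof. by rewrite /edge_spin !ffunE bC (negbTE aC) spinN mulrN. Qed.

Lemma ising_Z_edge th : ising_Z e th = \sum_s rest_weight a b th s / 2.
Proof.
have odd_sum : \sum_s rest_weight a b th s * edge_spin a b s = 0.
  apply: (sum_odd_involution flip_spinsK) => s.
  by rewrite rest_weight_flip edge_spin_flip mulrN.
transitivity (\sum_s (rest_weight a b th s / 2 +
    th [set a; b] / 2 * (rest_weight a b th s * edge_spin a b s))).
  apply: eq_bigr => s _.
  by rewrite (ising_weight_edge _ _ eab ab) /edge_factor /edge_spin; ring.
by rewrite big_split /= -mulr_sumr odd_sum mulr0 addr0.
Qed.

End FlipCut.

End IsingEdge.

Lemma leaf_marginalE (R : realFieldType) (V : finType) (n : nat) (e : rel V)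
    (lab : 'I_n -> V) (th : {set V} -> R) (x : {ffun 'I_n -> bool}) :
  leaf_marginal e lab th x =
    (\sum_(s : {ffun V -> bool} | [ffun i => s (lab i)] == x) ising_weight e th s)
      / ising_Z e th.
Proof.
congr (_ / _); apply: eq_bigl => s; apply/forallP/eqP => [s_x|<- i].
  by apply/ffunP => i; rewrite ffunE; apply/eqP.
by rewrite ffunE.
Qed.

Theorem lemma12 (R : realFieldType) (V : finType) (n : nat) (e : rel V)
  (lab : 'I_n -> V) (theta theta' : {set V} -> R) (a b : V) :
  is_tree e ->
  injective lab ->
  (forall v : V, (v \in codom lab) = is_leaf e v) ->
  (forall u v : V, e u v -> -1 <= theta [set u; v] <= 1) ->
  (forall u v : V, e u v -> -1 <= theta' [set u; v] <= 1) ->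
  e a b ->
  (forall u v : V, e u v -> [set u; v] != [set a; b] ->
     theta' [set u; v] = theta [set u; v]) ->
  TV (leaf_marginal e lab theta) (leaf_marginal e lab theta')
    <= `|theta' [set a; b] - theta [set a; b]| / 2.
Proof.
move=> [esym [eirr [_ acyc]]] _ _ theta_bd _ eab theta'_off.
have ab : a != b by apply: contraTneq eab => ->; rewrite eirr.
have [C [bC aC cutC]] := tree_edge_cut esym acyc eab ab.
pose Z := \sum_s rest_weight e a b theta s.
have Z_ge0 : 0 <= Z by apply: sumr_ge0 => s _; apply: rest_weight_ge0.
have ZE th : eq_off_edge e a b theta th -> ising_Z e th = Z / 2.
  move=> th_off; rewrite (ising_Z_edge esym eab ab bC aC cutC) -mulr_suml.
  by congr (_ / _); apply: eq_bigr => s _; apply: rest_weight_eq.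
apply: le_trans (TV_pushforward_le
  (f := fun s : {ffun V -> bool} => [ffun i => s (lab i)]) (Z := Z / 2) _ _ _) _.
- by rewrite divr_ge0.
- by move=> x; rewrite leaf_marginalE ZE.
- by move=> x; rewrite leaf_marginalE ZE.
under eq_bigr do
  rewrite distrC (normr_ising_weight_sub esym _ eab ab theta_bd theta'_off).
rewrite -mulr_suml -/Z [2 * _]mulrC; have [->|Z_neq0] := eqVneq Z 0.
  by rewrite !mul0r divr_ge0.
by rewrite divfK ?pnatr_eq0 // mulrC mulKf.
Qed.
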